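(* Let $Q_k^A,Q_k^B$ be the SDQ iterates and $w_k^A,w_k^B$ the associated noise vectors (see context). Let $Q_k^{\mathrm{err}_U}$ and $Q_k^{\mathrm{err}_{UL}}$ be defined by \[ Q_{k+1}^{\mathrm{err}_U}=(I+\alpha\gamma DP\Pi_{Q_k^{\mathrm{err}_U}}-\alpha D)Q_k^{\mathrm{err}_U}+\alpha w_k^A-\alpha w_k^B,\qquad Q_{k+1}^{\mathrm{err}_{UL}}=(I+\alpha\gamma DP\Pi_{Q^*}-\alpha D)Q_k^{\mathrm{err}_{UL}}+\alpha w_k^A-\alpha w_k^B, \] with initial vectors $Q_0^{\mathrm{err}_U},Q_0^{\mathrm{err}_{UL}}\in\mathbb{R}^{|\mathcal{S}||\mathcal{A}|}$. If $Q_0^{\mathrm{err}_U}\ge Q_0^{\mathrm{err}_{UL}}$ element-wise, then $Q_k^{\mathrm{err}_U}\ge Q_k^{\mathrm{err}_{UL}}$ element-wise for all $k\ge0$.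
   Context: Finite MDP with states $\mathcal{S}=\{1,\dots,|\mathcal{S}|\}$, actions $\mathcal{A}=\{1,\dots,|\mathcal{A}|\}$, transitions $P(s'|s,a)$, bounded deterministic reward $r(s,a,s')$, discount $\gamma\in(0,1)$, optimal action-value function $Q^*$. Sampling distribution $d(s,a)>0$ on $\mathcal{S}\times\mathcal{A}$; at iteration $k$, $(s_k,a_k)\sim d$ i.i.d., $s_k'\sim P(\cdot|s_k,a_k)$, $r_{k+1}=r(s_k,a_k,s_k')$. Constant step-size $\alpha\in(0,1)$. SDQ: only entry $(s_k,a_k)$ is updated, $Q_{k+1}^A(s_k,a_k)=Q_k^A(s_k,a_k)+\alpha\{r_{k+1}+\gamma Q_k^A(s_k',\arg\max_aQ_k^B(s_k',a))-Q_k^A(s_k,a_k)\}$ and symmetrically for $B$ with roles of $A,B$ swapped. Vector notation: $Q\in\mathbb{R}^{|\mathcal{S}||\mathcal{A}|}$ stacks $Q(\cdot,1),\dots,Q(\cdot,|\mathcal{A}|)$, so $Q(s,a)=(e_a\otimes e_s)^TQ$. $D$ is the diagonal matrix with entry $d(s,a)$ at position $(s,a)$. $P\in\mathbb{R}^{|\mathcal{S}||\mathcal{A}|\times|\mathcal{S}|}$ has row $(s,a)$ equal to $P(\cdot|s,a)$. $R(s,a)=\mathbb{E}[r(s,a,s')|s,a]$. For $Q$, $\pi_Q(s)=\arg\max_aQ(s,a)$ (fixed tie-breaking) and $\Pi_Q\in\mathbb{R}^{|\mathcal{S}|\times|\mathcal{S}||\mathcal{A}|}$ has $s$-th row $e_{\pi_Q(s)}^T\otimes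 e_s^T$. Noise: $w_k^A=(e_{a_k}\otimes e_{s_k})r_{k+1}+\gamma(e_{a_k}\otimes e_{s_k})e_{s_k'}^T\Pi_{Q_k^B}Q_k^A-(e_{a_k}\otimes e_{s_k})(e_{a_k}\otimes e_{s_k})^TQ_k^A-(DR+\gamma DP\Pi_{Q_k^B}Q_k^A-DQ_k^A)$, and $w_k^B$ is the same with $A$ and $B$ swapped. *)

(* Q-vectors in R^{|S||A|} are represented as functions
   S -> A -> R (entry (s,a) of the stacked vector); matrix products with
   D, P, Pi_Q are written out entrywise. *)
From mathcomp Require Import all_boot all_order all_algebra.
Set Implicit Arguments. Unset Strict Implicit. Unset Printing Implicit Defensive.
Import Order.TTheory GRing.Theory Num.Theory.
Local Open Scope ring_scope.

Section SDQ.
Variables (R : realFieldType) (S A : finType).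

Definition qvec := S -> A -> R.

Definition qle (Q1 Q2 : qvec) : Prop := forall s a, Q1 s a <= Q2 s a.

Definition greedy (pi : qvec -> S -> A) : Prop :=
  forall (Q : qvec) s a, Q s a <= Q s (pi Q s).

(* row-stochastic transition kernel P(s'|s,a) = P s a s' *)
Definition stochastic (P : S -> A -> S -> R) : Prop :=
  (forall s a s', 0 <= P s a s') /\ (forall s a, \sum_(s' : S) P s a s' = 1).

Definition pos_distr (d : S -> A -> R) : Prop :=
  (forall s a, 0 < d s a) /\ (\sum_(s : S) \sum_(a : A) d s a = 1).

(* R(s,a) = E[r(s,a,s') | s,a] *)
Definition Rexp (P r : S -> A -> S -> R) : qvec :=
  fun s a => \sum_(s' : S) P s a s' * r s a s'.

(* (P Pi_{Q'} Q)(s,a) = sum_{s'} P(s'|s,a) Q(s', pi_{Q'}(s')) *)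
Definition PPi (P : S -> A -> S -> R) (pi : qvec -> S -> A) (Q' Q : qvec) : qvec :=
  fun s a => \sum_(s' : S) P s a s' * Q s' (pi Q' s').

(* Q* is the optimal action-value function: Bellman optimality equation
   Q*(s,a) = R(s,a) + gamma * sum_{s'} P(s'|s,a) max_{a'} Q*(s',a') *)
Definition optimal_Q (P r : S -> A -> S -> R) (gamma : R) (pi : qvec -> S -> A)
  (Qs : qvec) : Prop :=
  forall s a, Qs s a = Rexp P r s a + gamma * PPi P pi Qs Qs s a.

Definition ind (sk : nat -> S) (ak : nat -> A) (k : nat) (s : S) (a : A) : R :=
  if (s == sk k) && (a == ak k) then 1 else 0.

Definition sdq_upd (r : S -> A -> S -> R) (gamma alpha : R) (pi : qvec -> S -> A)
  (sk : nat -> S) (ak : nat -> A) (sk' : nat -> S) (k : nat) (QX QY : qvec) : qvec :=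
  fun s a => QX s a + alpha * ind sk ak k s a *
     (r (sk k) (ak k) (sk' k) + gamma * QX (sk' k) (pi QY (sk' k)) - QX s a).

Fixpoint sdq (r : S -> A -> S -> R) (gamma alpha : R) (pi : qvec -> S -> A)
  (sk : nat -> S) (ak : nat -> A) (sk' : nat -> S) (QA0 QB0 : qvec) (k : nat)
  : qvec * qvec :=
  match k with
  | 0 => (QA0, QB0)
  | k'.+1 =>
      let QA := (sdq r gamma alpha pi sk ak sk' QA0 QB0 k').1 in
      let QB := (sdq r gamma alpha pi sk ak sk' QA0 QB0 k').2 in
      (sdq_upd r gamma alpha pi sk ak sk' k' QA QB,
       sdq_upd r gamma alpha pi sk ak sk' k' QB QA)
  end.

(* noise vector
   w = (e_{a_k} (x) e_{s_k}) r_{k+1} + gamma (e (x) e) e_{s'_k}^T Pi_{QY} QX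
       - (e (x) e)(e (x) e)^T QX - (D R + gamma D P Pi_{QY} QX - D QX) *)
Definition noise (P r : S -> A -> S -> R) (d : S -> A -> R) (gamma : R)
  (pi : qvec -> S -> A) (sk : nat -> S) (ak : nat -> A) (sk' : nat -> S)
  (k : nat) (QX QY : qvec) : qvec :=
  fun s a =>
    ind sk ak k s a * r (sk k) (ak k) (sk' k)
    + gamma * ind sk ak k s a * QX (sk' k) (pi QY (sk' k))
    - ind sk ak k s a * QX s a
    - (d s a * Rexp P r s a + gamma * (d s a * PPi P pi QY QX s a) - d s a * QX s a).

Definition wA P r d gamma alpha pi sk ak sk' QA0 QB0 (k : nat) : qvec :=
  let Q := sdq r gamma alpha pi sk ak sk' QA0 QB0 k in
  noise P r d gamma pi sk ak sk' k Q.1 Q.2.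

Definition wB P r d gamma alpha pi sk ak sk' QA0 QB0 (k : nat) : qvec :=
  let Q := sdq r gamma alpha pi sk ak sk' QA0 QB0 k in
  noise P r d gamma pi sk ak sk' k Q.2 Q.1.

(* generic error recursion
   E_{k+1} = (I + alpha gamma D P Pi_{sel E_k} - alpha D) E_k + alpha w_k^A - alpha w_k^B *)
Fixpoint err_rec (P : S -> A -> S -> R) (d : S -> A -> R) (gamma alpha : R)
  (pi : qvec -> S -> A) (sel : qvec -> qvec) (wa wb : nat -> qvec) (E0 : qvec)
  (k : nat) : qvec :=
  match k with
  | 0 => E0
  | k'.+1 =>
      let E := err_rec P d gamma alpha pi sel wa wb E0 k' in
      fun s a => E s a + alpha * gamma * (d s a * PPi P pi (sel E) E s a)
                 - alpha * (d s a * E s a) + alpha * wa k' s a - alpha * wb k' s a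
  end.

End SDQ.

(** The error recursion is driven by the same noise [w^A - w^B] in both
    systems, so the noise cancels in the difference.  Entrywise, one step maps
    [E] to [(1 - alpha d) E + alpha gamma d P Pi_{sel E} E] plus that noise;
    the weight [1 - alpha d] is nonnegative because [d <= 1] and [alpha < 1],
    and the greedy policy maximises [P Pi_Q E] over all [Q], so
    [P Pi_{Q*} L <= P Pi_U L <= P Pi_U U] whenever [L <= U].  Hence the order
    [L <= U] is preserved by every step. *)

From mathcomp Require Import all_boot all_order all_algebra.
From mathcomp Require Import ring.
Import Order.TTheory GRing.Theory Num.Theory.
Local Open Scope ring_scope.

Lemma ler_term_sum {R : numDomainType} {T : finType} (F : T -> R) (t : T) :
  (forall x, 0 <= F x) -> F t <= \sum_x F x.
Proof. by move=> F_ge0; rewrite (bigD1 t) //= lerDl sumr_ge0. Qed.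

Section Monotonicity.
Context {R : realFieldType} {S A : finType}.
Implicit Types (L U Q : qvec R S A).

Lemma pos_distr_le1 (d : S -> A -> R) s a : pos_distr d -> d s a <= 1.
Proof.
move=> [d_gt0 d_sum1]; rewrite -d_sum1.
have d_ge0 x b : 0 <= d x b by exact: ltW.
apply: le_trans (ler_term_sum (fun b => d s b) a (d_ge0 s)) _.
by apply: (ler_term_sum (fun x => \sum_b d x b)) => x; exact: sumr_ge0.
Qed.

Lemma PPi_le_greedy (P : S -> A -> S -> R) (pi : qvec R S A -> S -> A) Q L U :
  (forall s a s', 0 <= P s a s') -> greedy pi -> qle L U ->
  qle (PPi P pi Q L) (PPi P pi U U).
Proof.
move=> P_ge0 pi_greedy LU s a; apply: ler_sum => s' _.
by apply: ler_wpM2l => //; apply: le_trans (LU _ _) (pi_greedy _ _ _).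
Qed.

Variables (P : S -> A -> S -> R) (d : S -> A -> R) (gamma alpha : R).
Variables (pi : qvec R S A -> S -> A) (wa wb : nat -> qvec R S A).
Hypotheses (gamma_ge0 : 0 <= gamma) (alpha_ge0 : 0 <= alpha).
Hypotheses (d_ge0 : forall s a, 0 <= d s a) (alpha_d_le1 : forall s a, alpha * d s a <= 1).

Lemma err_rec_le (selL selU : qvec R S A -> qvec R S A) L0 U0 k :
  (forall L U, qle L U -> qle (PPi P pi (selL L) L) (PPi P pi (selU U) U)) ->
  qle L0 U0 ->
  qle (err_rec P d gamma alpha pi selL wa wb L0 k)
      (err_rec P d gamma alpha pi selU wa wb U0 k).
Proof.
move=> PPi_le LU0; elim: k => [|k LU] //= s a.
set L := err_rec _ _ _ _ _ _ _ _ _ k; set U := err_rec _ _ _ _ _ _ _ _ _ k.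
have step_diff_ge0 : 0 <= (1 - alpha * d s a) * (U s a - L s a)
    + alpha * gamma * d s a * (PPi P pi (selU U) U s a - PPi P pi (selL L) L s a).
  apply: addr_ge0; apply: mulr_ge0.
  - by rewrite subr_ge0.
  - by rewrite subr_ge0 LU.
  - by rewrite !mulr_ge0.
  - by rewrite subr_ge0 PPi_le.
by rewrite -subr_ge0; move: step_diff_ge0; congr (0 <= _); ring.
Qed.

End Monotonicity.

Theorem proposition4 (R : realFieldType) (S A : finType)
  (P r : S -> A -> S -> R) (d : S -> A -> R) (gamma alpha : R)
  (pi : qvec R S A -> S -> A) (Qstar : qvec R S A)
  (sk : nat -> S) (ak : nat -> A) (sk' : nat -> S)
  (QA0 QB0 EU0 EUL0 : qvec R S A) :
  stochastic P -> pos_distr d ->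
  0 < gamma < 1 -> 0 < alpha < 1 ->
  greedy pi -> optimal_Q P r gamma pi Qstar ->
  qle EUL0 EU0 ->
  let wa := wA P r d gamma alpha pi sk ak sk' QA0 QB0 in
  let wb := wB P r d gamma alpha pi sk ak sk' QA0 QB0 in
  forall k : nat,
    qle (err_rec P d gamma alpha pi (fun _ => Qstar) wa wb EUL0 k)
        (err_rec P d gamma alpha pi (fun E => E) wa wb EU0 k).
Proof.
move=> [P_ge0 _] d_distr /andP[gamma_gt0 _] /andP[alpha_gt0 alpha_lt1]
  pi_greedy _ E0_le wa wb k.
have d_ge0 s a : 0 <= d s a by exact/ltW/d_distr.1.
have alpha_d_le1 s a : alpha * d s a <= 1.
  apply: le_trans (ltW alpha_lt1); rewrite ler_piMr ?(ltW alpha_gt0) //.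
  exact: pos_distr_le1.
apply: err_rec_le => // [||L U]; [exact: ltW | exact: ltW | exact: PPi_le_greedy].
Qed.
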